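(* The map $\mathcal W^{\mathrm m,\mathrm P}_r:\mathbf{roPG}\to\mathbb S^{\mathrm{m},\mathbb P}_r$ is compositional: for all roPGs of appropriate types, $\mathcal W^{\mathrm m,\mathrm P}_r(\mathcal C;\mathcal D)=\mathcal W^{\mathrm m,\mathrm P}_r(\mathcal C);\mathcal W^{\mathrm m,\mathrm P}_r(\mathcal D)$, $\mathcal W^{\mathrm m,\mathrm P}_r(\mathcal C\oplus\mathcal D)=\mathcal W^{\mathrm m,\mathrm P}_r(\mathcal C)\oplus\mathcal W^{\mathrm m,\mathrm P}_r(\mathcal D)$, and $\mathrm{tr}^l_{m,n}(\mathcal W^{\mathrm m,\mathrm P}_r(\mathcal E))=\mathcal W^{\mathrm m,\mathrm P}_r(\mathrm{tr}^l_{m,n}(\mathcal E))$.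
   Context: Notation: $[k]=\{1,\dots,k\}$; $X+Y$ disjoint union; $T(X)=X+\mathbb R\times X+\{\exists^*,\forall^*\}$; diagrammatic composition. An roMPG $\mathcal A:m\to n$ is $(m,n,Q,E,\rho,w)$: $Q$ finite set of positions, entrances $[m]$, exits $[n]$ (pairwise disjoint with $Q$), edges $E\subseteq([m]+Q)\times([n]+Q)$ with each entrance having exactly one successor and each exit at most one predecessor, $\rho:Q\to\{\exists,\forall\}$, $w:Q\to\mathbb R$. An roPG is an roMPG in which each element of $[m]+Q$ has at most one successor. For $\mathcal C:m\to l$, $\mathcal D:l\to n$, $\mathcal C;\mathcal D$ has positions $Q^{\mathcal C}+Q^{\mathcal D}$ with inherited roles/weights and edges: those of $\mathcal C$ from $[m]+Q^{\mathcal C}$ to $Q^{\mathcal C}$; those of $\mathcal D$ from $Q^{\mathcal D}$ to $[n]+Q^{\mathcal D}$; $(s,s')$ with $s\in[m]+Q^{\mathcal C}$, $s'\in[n]+Q^{\mathcal D}$ whenever some $i\in[l]$ has $(s,i)\in E^{\mathcal C}$ and $(i,s')\in E^{\mathcal D}$. $\mathcal C\oplus\mathcal D$ is the disjoint union with the second's entrances/exits shifted by the first's numbers of entrances/exits. For $\mathcal E:l+m\to l+n$, $\mathrm{tr}^l_{m,n}(\mathcal E):m\to n$ keeps positions, roles, weights, and $(s,s')\in([m]+Q)\times([n]+Q)$ is an edge iff there are $k\ge0$, $i_1,..,i_k\in[l]$ with $(\hat s,i_1),(i_1,i_2),..,(i_k,\hat s')\in E^{\mathcal E}$ ($k=0$: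 $(\hat s,\hat s')\in E^{\mathcal E}$), $i_j$ read as exit when target, entrance when source, $\hat s=l+s$ for open ends, $\hat s=s$ for positions. $\mathbf{roPG}$ has objects $\mathbb N$ and arrows roPGs up to isomorphism. For an roPG $\mathcal C:m\to n$ and $i\in[m]$, $\pi^{\mathcal C}_i=(s_j)_{j\in J}$ ($J=\{0..M\}$ or $\mathbb N$) is the unique maximal sequence with $s_0=i$, $(s_j,s_{j+1})\in E$. Its denotation $[\![\pi]\!]\in T([n])$: $s_1$ if $J=\{0,1\}$ and $s_1$ is an exit; $(\sum_{j=1}^{M-1}w(s_j),s_M)$ if $M\ge2$, $s_M$ an exit; $\exists^*$ if $J$ finite and $s_M$ a $\forall$-position, or $J$ infinite with $\liminf_N\frac1N\sum_{j=1}^Nw(s_j)\ge0$; $\forall^*$ if $J$ finite and $s_M$ an $\exists$-position, or $J$ infinite with that liminf $<0$. $\mathbb S^{\mathrm{m},\mathbb P}_r$: objects $\mathbb N$; arrows $f:m\to n$ are functions $[m]\to T([n])$ with: for $i\ne j$, $f(i)\notin[n]$ or $f(j)\notin\{f(i)\}\cup\mathbb R\times\{f(i)\}$; hom-sets ordered pointwise by the least order on $T([n])$ with $(r_1,i)\le(r_2,i)$ if $r_1\ge r_2$, $\exists^*\le z\le\forall^*$. Operations: $(f;g)(i)=f(i)$ if $f(i)\in\{\exists^*,\forall^*\}$; $g(j)$ if $f(i)=j$; $g(j)$ if $f(i)=(r,j)$, $g(j)\in\{\exists^*,\forall^*\}$; $(r,k)$ if $f(i)=(r,j)$, $g(j)=k$;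 $(r+r',k)$ if $f(i)=(r,j)$, $g(j)=(r',k)$. $(f\oplus g)(i)=f(i)$ ($i\le m$), $(f\oplus g)(m+i)$ is $g(i)$ with its index $j$ (if any) shifted to $n+j$. Trace of $f:l+m\to l+n$ at $i$: $v_0=l+i$; if $j=0$ or $v_j\in[l]$, $v_{j+1}=f(v_j)$; if $v_j=(r,k)$, $k\in[l]$, $v_{j+1}=f(k)$; otherwise stop. If finite $(v_0..v_K)$ with $S$ the sum of first components of $v_j\in\mathbb R\times[l+n]$ ($1\le j\le K$): $v_K$ if $v_K\in\{\exists^*,\forall^*\}$; $k$ if $v_K=l+k$ and $v_j\in[l]$ for $1\le j<K$; $(S,k)$ if $v_K=l+k$ and some earlier $v_j\in\mathbb R\times[l]$; $(S,k)$ if $v_K=(r,l+k)$. If infinite, with $w'_t$ the first components of the (infinitely many) entries in $\mathbb R\times[l]$: $\exists^*$ if $\liminf_N\frac1N\sum_{t\le N}w'_t\ge0$, else $\forall^*$. $\mathcal W^{\mathrm m,\mathrm P}_r$ is the identity on objects and sends $\mathcal C:m\to n$ to $i\mapsto[\![\pi^{\mathcal C}_i]\!]$. *)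

From Stdlib Require Import Reals ClassicalEpsilon.
From Coquelicot Require Import Coquelicot.
From mathcomp Require Import ssreflect ssrfun ssrbool eqtype ssrnat seq choice fintype.

Unset Printing Implicit Defensive.

(* T(X) = X + R x X + {exists*, forall*}                               *)
Inductive T (X : Type) : Type :=
  | TExit of X
  | TW of R & X
  | TEx
  | TAll.
Arguments TExit {X} _.
Arguments TW {X} _ _.
Arguments TEx {X}.
Arguments TAll {X}.

Definition Tmap {X Y : Type} (h : X -> Y) (z : T X) : T Y :=
  match z with
  | TExit x => TExit (h x)
  | TW r x => TW r (h x)
  | TEx => TEx
  | TAll => TAll
  end.

Inductive Role : Type := RExists | RForall.

(* roMPGs  m -> n : positions Q (finite), entrances 'I_m, exits 'I_n.  *)
Record roMPG (m n : nat) : Type := RoMPG {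
  pos : finType;
  edge : 'I_m + pos -> 'I_n + pos -> Prop;
  role : pos -> Role;
  wt : pos -> R
}.
Arguments RoMPG {m n}.
Arguments pos {m n} _.
Arguments edge {m n} _ _ _.
Arguments role {m n} {_} _.
Arguments wt {m n} {_} _.

Definition is_roMPG {m n} (A : roMPG m n) : Prop :=
  (forall i : 'I_m, exists! t, edge A (inl i) t) /\
  (forall (j : 'I_n) s s', edge A s (inl j) -> edge A s' (inl j) -> s = s').

Definition is_roPG {m n} (A : roMPG m n) : Prop :=
  is_roMPG A /\ (forall s t t', edge A s t -> edge A s t' -> t = t').

Definition seq_pos {m l n} (C : roMPG m l) (D : roMPG l n) : finType :=
  Finite.clone _ (pos C + pos D)%type.

Definition seq_src {m l n} (C : roMPG m l) (D : roMPG l n)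
  (s : 'I_m + pos C) : 'I_m + seq_pos C D :=
  match s with inl i => inl i | inr q => inr (inl q) end.
Definition seq_tgt {m l n} (C : roMPG m l) (D : roMPG l n)
  (t : 'I_n + pos D) : 'I_n + seq_pos C D :=
  match t with inl j => inl j | inr q => inr (inr q) end.

Definition seq_edge {m l n} (C : roMPG m l) (D : roMPG l n)
  (s : 'I_m + seq_pos C D) (t : 'I_n + seq_pos C D) : Prop :=
  (exists sc qc, s = seq_src C D sc /\ t = inr (inl qc) /\ edge C sc (inr qc)) \/
  (exists qd td, s = inr (inr qd) /\ t = seq_tgt C D td /\ edge D (inr qd) td) \/
  (exists sc td (i : 'I_l), s = seq_src C D sc /\ t = seq_tgt C D td /\
     edge C sc (inl i) /\ edge D (inl i) td).

Definition roseq {m l n} (C : roMPG m l) (D : roMPG l n) : roMPG m n :=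
  RoMPG (seq_pos C D) (@seq_edge m l n C D)
    (fun q => match q with inl q => role q | inr q => role q end)
    (fun q => match q with inl q => wt q | inr q => wt q end).

Definition sum_pos {m1 n1 m2 n2} (C : roMPG m1 n1) (D : roMPG m2 n2) : finType :=
  Finite.clone _ (pos C + pos D)%type.

Definition sum_edge {m1 n1 m2 n2} (C : roMPG m1 n1) (D : roMPG m2 n2)
  (s : 'I_(m1 + m2) + sum_pos C D) (t : 'I_(n1 + n2) + sum_pos C D) : Prop :=
  (exists sc tc, edge C sc tc /\
     s = match sc with inl i => inl (lshift m2 i) | inr q => inr (inl q) end /\
     t = match tc with inl j => inl (lshift n2 j) | inr q => inr (inl q) end) \/
  (exists sd td, edge D sd td /\
     s = match sd with inl i => inl (rshift m1 i) | inr q => inr (inr q) end /\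
     t = match td with inl j => inl (rshift n1 j) | inr q => inr (inr q) end).

Definition rosum {m1 n1 m2 n2} (C : roMPG m1 n1) (D : roMPG m2 n2)
  : roMPG (m1 + m2) (n1 + n2) :=
  RoMPG (sum_pos C D) (@sum_edge m1 n1 m2 n2 C D)
    (fun q => match q with inl q => role q | inr q => role q end)
    (fun q => match q with inl q => wt q | inr q => wt q end).

(* chain s i_1 ... i_k t : (s,i_1),(i_1,i_2),...,(i_k,t) are edges of E,
   with i_j read as exit (lshift n) when target, entrance (lshift m) when source *)
Fixpoint tr_chain {l m n} (E : roMPG (l + m) (l + n))
  (s : 'I_(l + m) + pos E) (ks : seq 'I_l) (t : 'I_(l + n) + pos E) : Prop :=
  match ks with
  | [::] => edge E s t
  | i :: ks' => edge E s (inl (lshift n i)) /\ tr_chain E (inl (lshift m i)) ks' t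
  end.

Definition tr_edge {l m n} (E : roMPG (l + m) (l + n))
  (s : 'I_m + pos E) (t : 'I_n + pos E) : Prop :=
  exists ks : seq 'I_l,
    tr_chain E (match s with inl i => inl (rshift l i) | inr q => inr q end) ks
             (match t with inl j => inl (rshift l j) | inr q => inr q end).

Definition rotrace {l m n} (E : roMPG (l + m) (l + n)) : roMPG m n :=
  RoMPG (pos E) (@tr_edge l m n E) (@role _ _ E) (@wt _ _ E).

(* liminf_N (1/N) sum_{j=1}^N w_j >= 0, for w_1, w_2, ... given as w 0, w 1, ... *)
Definition mean_liminf_nonneg (w : nat -> R) : Prop :=
  Rbar_le (Rbar.Finite 0%R) (LimInf_seq (fun N => sum_f_R0 w N / INR (S N))).

(* finite path i, s_1 .. s_{M-1} (positions qs), s_M = t *)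
Fixpoint path_chain {m n} (C : roMPG m n) (s : 'I_m + pos C) (qs : seq (pos C))
  (t : 'I_n + pos C) : Prop :=
  match qs with
  | [::] => edge C s t
  | q :: qs' => edge C s (inr q) /\ path_chain C (inr q) qs' t
  end.

Definition fin_maxpath {m n} (C : roMPG m n) (i : 'I_m) (qs : seq (pos C))
  (t : 'I_n + pos C) : Prop :=
  path_chain C (inl i) qs t /\
  (match t with inl _ => True | inr q => forall t', ~ edge C (inr q) t' end).

(* infinite path i, s_1, s_2, ... where s_{j+1} = s j *)
Definition inf_path {m n} (C : roMPG m n) (i : 'I_m) (s : nat -> pos C) : Prop :=
  edge C (inl i) (inr (s 0%nat)) /\ forall j, edge C (inr (s j)) (inr (s (S j))).

Definition fin_den {m n} (C : roMPG m n) (qs : seq (pos C)) (t : 'I_n + pos C)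
  : T 'I_n :=
  match t with
  | inl j => if qs is [::] then TExit j else TW (foldr Rplus 0%R (map (@wt _ _ C) qs)) j
  | inr q => match role q with RForall => TEx | RExists => TAll end
  end.

Definition W_den {m n} (C : roMPG m n) (i : 'I_m) (d : T 'I_n) : Prop :=
  (exists qs t, fin_maxpath C i qs t /\ d = fin_den C qs t) \/
  (exists s, inf_path C i s /\
     ((mean_liminf_nonneg (fun j => wt (s j)) /\ d = TEx) \/
      (~ mean_liminf_nonneg (fun j => wt (s j)) /\ d = TAll))).

(* W^{m,P}_r(C) : i |-> [[pi^C_i]]  (pi^C_i unique for an roPG) *)
Definition Wmp {m n} (C : roMPG m n) : 'I_m -> T 'I_n :=
  fun i => epsilon (inhabits TEx) (W_den C i).

Definition S_arrow {m n} (f : 'I_m -> T 'I_n) : Prop :=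
  forall i j : 'I_m, i <> j ->
    forall k : 'I_n, f i = TExit k -> f j <> TExit k /\ forall r, f j <> TW r k.

Definition Scomp {m l n} (f : 'I_m -> T 'I_l) (g : 'I_l -> T 'I_n) : 'I_m -> T 'I_n :=
  fun i => match f i with
  | TEx => TEx
  | TAll => TAll
  | TExit j => g j
  | TW r j => match g j with
              | TEx => TEx
              | TAll => TAll
              | TExit k => TW r k
              | TW r' k => TW (r + r') k
              end
  end.

Definition Ssum {m1 n1 m2 n2} (f : 'I_m1 -> T 'I_n1) (g : 'I_m2 -> T 'I_n2)
  : 'I_(m1 + m2) -> T 'I_(n1 + n2) :=
  fun i => match split i with
  | inl i1 => Tmap (lshift n2) (f i1)
  | inr i2 => Tmap (@rshift n1 n2) (g i2)
  end.

(* the trace sequence: u j = v_{j+1} (Some) while defined, None after stopping *)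
Definition tr_next {l m n} (f : 'I_(l + m) -> T 'I_(l + n)) (v : T 'I_(l + n))
  : option (T 'I_(l + n)) :=
  match v with
  | TExit x | TW _ x => match split x with
                       | inl k => Some (f (lshift m k))
                       | inr _ => None
                       end
  | _ => None
  end.

Fixpoint tr_seq {l m n} (f : 'I_(l + m) -> T 'I_(l + n)) (i : 'I_m) (j : nat)
  : option (T 'I_(l + n)) :=
  match j with
  | 0 => Some (f (rshift l i))
  | S j' => match tr_seq f i j' with Some v => tr_next f v | None => None end
  end.

Definition is_wl {l n} (o : option (T 'I_(l + n))) : Prop :=
  exists r x k, o = Some (TW r x) /\ split x = inl k.

Definition weight_of {l n} (o : option (T 'I_(l + n))) : R :=
  match o with Some (TW r _) => r | _ => 0%R end.

Definition Strace_den {l m n} (f : 'I_(l + m) -> T 'I_(l + n)) (i : 'I_m)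
  (d : T 'I_n) : Prop :=
  let u := tr_seq f i in
  let Ssum K := sum_f_R0 (fun j => weight_of (u j)) K in
  (* finite cases: last entry v_K = u K *)
  (exists K, u K = Some TEx /\ d = TEx) \/
  (exists K, u K = Some TAll /\ d = TAll) \/
  (exists K x k, u K = Some (TExit x) /\ split x = inr k /\
     (((forall j, (j < K)%nat -> ~ is_wl (u j)) /\ d = TExit k) \/
      ((exists j, (j < K)%nat /\ is_wl (u j)) /\ d = TW (Ssum K) k))) \/
  (exists K r x k, u K = Some (TW r x) /\ split x = inr k /\ d = TW (Ssum K) k) \/
  (* infinite case: phi enumerates (increasingly) the entries in R x [l] *)
  ((forall j, u j <> None) /\
   exists phi : nat -> nat,
     (forall t, (phi t < phi (S t))%nat) /\
     (forall j, is_wl (u j) <-> exists t, phi t = j) /\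
     ((mean_liminf_nonneg (fun t => weight_of (u (phi t))) /\ d = TEx) \/
      (~ mean_liminf_nonneg (fun t => weight_of (u (phi t))) /\ d = TAll))).

Definition Strace {l m n} (f : 'I_(l + m) -> T 'I_(l + n)) : 'I_m -> T 'I_n :=
  fun i => epsilon (inhabits TEx) (Strace_den f i).

From Stdlib Require Import Reals Lra Lia ClassicalEpsilon Classical FunctionalExtensionality.
From Coquelicot Require Import Coquelicot.
From mathcomp Require Import ssreflect ssrfun ssrbool eqtype ssrnat seq fintype.
From mathcomp Require Import zify.

(* In an roPG the play from an entrance is unique: a finite path ending at an exit or at a
   position without successor, or an infinite path, and [Wmp] reads off its denotation.
   In [C ; D] the play from [i] follows [C] and, if it leaves [C] through the interface
   exit [j], continues as the play of [D] from [j]; the concatenated play has the composite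
   denotation.  In [C (+) D] a play never leaves its component.
   In the trace of [E] the play from [i] is the concatenation of the segments of the plays
   of [E] between successive visits of the looped interface [l]; the sequence computed by
   [Strace] runs through exactly these segments.  If it stops, the last play of [E] ends
   the concatenation.  Otherwise infinitely many segments are nonempty: an exit has at most
   one predecessor, so empty segments cannot cycle forever among the finitely many
   entrances.  Since a segment visits at most [#|pos E|] positions, the running averages of
   the weights along the concatenated play and along the sequence of segment weights then
   have liminfs of the same sign. *)

Close Scope R_scope.

Lemma increasing_ge_id (n : nat -> nat) : (forall t, n t < n t.+1) -> forall t, (t <= n t).
Proof. by move=> n_incr; elim=> [//|t IH]; apply: leq_ltn_trans IH (n_incr t). Qed.

Lemma increasing_bracket (n : nat -> nat) N :
  (forall t, n t < n t.+1) -> (n 0 <= N) -> exists t, (n t <= N < n t.+1).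
Proof.
move=> n_incr; elim: N => [|N IH] le_n0N.
  by exists 0; rewrite le_n0N (leq_ltn_trans (leq0n _) (n_incr 0)).
case: (leqP (n 0) N) => [/IH [t /andP [le_ntN lt_N]]|].
  case: (ltngtP N.+1 (n t.+1)) lt_N => [lt_SN _|//|eq_SN _].
    by exists t; rewrite lt_SN andbT; apply: leq_trans le_ntN _.
  by exists t.+1; rewrite eq_SN leqnn n_incr.
move=> lt_Nn0; have E : n 0 = N.+1 by apply/eqP; rewrite eqn_leq le_n0N.
by exists 0; rewrite E leqnn -E n_incr.
Qed.

Lemma increasing_leq_mono {p : nat -> nat} :
  (forall t, p t < p t.+1) -> {mono p : a b / (a <= b)}.
Proof. by move=> p_incr; apply: leq_mono; apply: homo_ltn p_incr; apply: ltn_trans. Qed.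

Lemma increasing_enum_unique (P : nat -> Prop) (p1 p2 : nat -> nat) :
  (forall t, p1 t < p1 t.+1) -> (forall t, p2 t < p2 t.+1) ->
  (forall j, P j <-> exists t, p1 t = j) -> (forall j, P j <-> exists t, p2 t = j) ->
  p1 = p2.
Proof.
have le_enum (p q : nat -> nat) t : (forall t, p t < p t.+1) -> (forall t, q t < q t.+1) ->
    (forall j, (exists t, p t = j) -> exists t, q t = j) ->
    (forall t', (t' < t) -> p t' = q t') -> (q t <= p t).
  move=> p_incr q_incr p_sub_q eq_below.
  have [t2 E2] := p_sub_q (p t) (ex_intro _ t erefl).
  case: (ltnP t2 t) => [lt_t2t|le_tt2]; last by rewrite -E2 increasing_leq_mono.
  by have := lt_t2t; rewrite -(leqW_mono (increasing_leq_mono p_incr)) eq_below // E2 ltnn.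
move=> p1_incr p2_incr H1 H2; apply: functional_extensionality; elim/ltn_ind => t IH.
apply/eqP; rewrite eqn_leq; apply/andP; split.
- apply: (le_enum p2 p1 t) => // [j [t0 <-]|t' /IH //].
  by apply/H1/H2; exists t0.
- apply: (le_enum p1 p2 t) => // j [t0 <-].
  by apply/H2/H1; exists t0.
Qed.

Lemma least_nat (P : nat -> Prop) :
  (exists k, P k) -> exists k, P k /\ forall j, (j < k) -> ~ P j.
Proof.
move=> /(Wf_nat.dec_inh_nat_subset_has_unique_least_element P (fun j => classic (P j))).
by case=> k [[Pk k_least] _]; exists k; split => // j /ltP lt_jk /k_least; lia.
Qed.

Lemma enum_infinite (P : nat -> Prop) : (forall N, exists j, (N <= j) /\ P j) ->
  exists phi : nat -> nat, (forall t, phi t < phi t.+1) /\ forall j, P j <-> exists t, phi t = j.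
Proof.
move=> P_inf.
pose least_above N j := ((N <= j) /\ P j) /\ forall j', (j' < j) -> ~ ((N <= j') /\ P j').
pose next N := epsilon (inhabits 0) (least_above N).
have next_spec N : [/\ (N <= next N), P (next N) &
    forall j, (N <= j) -> (j < next N) -> ~ P j].
  have [[le_N Pj] least] := epsilon_spec (inhabits 0) (least_above N)
    (least_nat (fun j => (N <= j) /\ P j) (P_inf N)).
  by split=> // j le_Nj lt_j Pj'; apply: (least j lt_j).
pose fix phi t := if t is t'.+1 then next (phi t').+1 else next 0.
have phi_incr t : (phi t < phi t.+1) by case: (next_spec (phi t).+1).
exists phi; split => // j; split => [Pj|[[|t] <-]]; last 2 first.
- by case: (next_spec 0).
- by case: (next_spec (phi t).+1).
have [|t /andP [le_tj lt_j]] := increasing_bracket phi j phi_incr.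
  by case: (leqP (next 0) j) => // lt_j; case: (next_spec 0) => _ _ /(_ j isT lt_j).
exists t; apply/eqP; rewrite eqn_leq le_tj /=; rewrite leqNgt; apply/negP => lt_tj.
by case: (next_spec (phi t).+1) => _ _ /(_ j lt_tj lt_j).
Qed.

Lemma injective_orbit_returns {X : finType} (x : nat -> X) :
  (forall a b, x a.+1 = x b.+1 -> x a = x b) -> exists b, x b.+1 = x 0.
Proof.
move=> x_pred; apply: NNPP => no_return.
have x_inj : injective x.
  elim=> [|a IH] [|b] //= E; [ | | by congr S; apply/IH/x_pred].
  - by case: no_return; exists b.
  - by case: no_return; exists a.
have := leq_card (fun j : 'I_#|X|.+1 => x j) (fun a b E => val_inj (x_inj _ _ E)).
by rewrite card_ord ltnn.
Qed.

Lemma dependent_choice_nat {X : Type} (P : X -> Prop) (Rel : X -> X -> Prop) x0 :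
  P x0 -> (forall x, P x -> exists y, P y /\ Rel x y) ->
  exists s : nat -> X, s 0 = x0 /\ forall j, Rel (s j) (s j.+1).
Proof.
move=> Px0 step.
have next (x : {x | P x}) : {y : {y | P y} | Rel (proj1_sig x) (proj1_sig y)}.
  apply: constructive_indefinite_description.
  by case: x => x Px; have [y [Py Rxy]] := step x Px; exists (exist _ y Py).
exists (fun j => proj1_sig (iter j (fun x => proj1_sig (next x)) (exist _ x0 Px0))).
by split=> // j; exact: proj2_sig (next _).
Qed.

(* The infinite sequence [p ++ s]. *)
Definition prepend {X : Type} (p : seq X) (s : nat -> X) (j : nat) : X :=
  nth (s (j - size p)) p j.

Lemma prepend_tail {X : Type} (p : seq X) s N : prepend p s (N + size p) = s N.
Proof. by rewrite /prepend nth_default ?leq_addl // addnK. Qed.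

Lemma mkseq_prepend {X : Type} (p : seq X) s N : mkseq (prepend p s) (size p + N) = p ++ mkseq s N.
Proof.
apply: (@eq_from_nth _ (s 0)); first by rewrite size_cat !size_mkseq.
move=> j; rewrite size_mkseq => lt_j; rewrite nth_mkseq // nth_cat /prepend.
case: ifP => [lt_jp|/negbT]; first exact: set_nth_default.
by rewrite -leqNgt => le_pj; rewrite nth_default // nth_mkseq // ltn_subLR.
Qed.

Lemma mkseq_split_at {X : Type} (g : nat -> X) {N M} :
  (N < M) -> exists r, mkseq g M = mkseq g N ++ g N :: r.
Proof.
move=> lt_NM; exists [seq g j | j <- iota N.+1 (M - N.+1)].
by rewrite -{1}(subnKC lt_NM) addSnnS /mkseq iotaD map_cat add0n.
Qed.

Section PrefixLimit.
Context {X : Type} (x0 : X) (Q : nat -> seq X).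
Hypothesis Q_prefix : forall K, exists r, Q K.+1 = Q K ++ r.

Lemma Q_prefix_le K1 K2 : (K1 <= K2) -> exists r, Q K2 = Q K1 ++ r.
Proof.
move=> /subnK <-; elim: (K2 - K1) => [|k [r Er]]; first by exists [::]; rewrite cats0.
by have [r' Er'] := Q_prefix (k + K1); exists (r ++ r'); rewrite addSn Er' Er catA.
Qed.

Definition prefix_limit (j : nat) : X :=
  nth x0 (Q (epsilon (inhabits 0) (fun K => j < size (Q K)))) j.

Lemma prefix_limit_nth K j : j < size (Q K) -> prefix_limit j = nth x0 (Q K) j.
Proof.
move=> lt_j; rewrite /prefix_limit.
set K' := epsilon _ _; have lt_j' : j < size (Q K')
  by apply: (epsilon_spec (inhabits 0) (fun K => j < size (Q K)) (ex_intro _ K lt_j)).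
have nth_le K1 K2 : K1 <= K2 -> j < size (Q K1) -> nth x0 (Q K2) j = nth x0 (Q K1) j.
  by move=> /Q_prefix_le [r ->] lt_j1; rewrite nth_cat lt_j1.
by case: (leqP K K') => [le|/ltnW le]; [rewrite (nth_le _ _ le) | rewrite -(nth_le _ _ le)].
Qed.

Lemma mkseq_prefix_limit K : mkseq prefix_limit (size (Q K)) = Q K.
Proof.
apply: (@eq_from_nth _ x0); first by rewrite size_mkseq.
by move=> j; rewrite size_mkseq => lt_j; rewrite nth_mkseq // (prefix_limit_nth K).
Qed.

End PrefixLimit.

(** * Mean payoff *)

Section MeanPayoff.
Local Open Scope R_scope.

Fixpoint partial_sum (a : nat -> R) (N : nat) : R :=
  match N with 0 => 0 | S N' => partial_sum a N' + a N' end.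

Lemma sum_f_R0_partial_sum a N : sum_f_R0 a N = partial_sum a N.+1.
Proof. by elim: N => [|N IH] /=; [lra | rewrite IH]. Qed.

Lemma partial_sumD a k N :
  partial_sum a (N + k) = partial_sum a k + partial_sum (fun j => a (j + k)%N) N.
Proof. by elim: N => [|N IH]; rewrite ?add0n ?addSn /=; [lra | rewrite IH; lra]. Qed.

Lemma eq_partial_sum a b N :
  (forall j, (j < N)%N -> a j = b j) -> partial_sum a N = partial_sum b N.
Proof.
elim: N => [|N IH] H //=.
by rewrite H // IH // => j hj; apply: H; apply: ltnW.
Qed.

Lemma partial_sum_ge a B N : (forall j, Rabs (a j) <= B) -> - (INR N * B) <= partial_sum a N.
Proof.
move=> HB; elim: N => [|N IH]; first by rewrite /=; lra.
rewrite S_INR [partial_sum a N.+1]/=; have := HB N; have := Rle_abs (- a N); rewrite Rabs_Ropp; lra.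
Qed.

Lemma prefix_bounded_below (g : nat -> R) K : exists C, forall N, (N <= K)%N -> - C <= g N.
Proof.
elim: K => [|K [C HC]].
  exists (Rabs (g 0%N)) => N; rewrite leqn0 => /eqP ->.
  by have := Rle_abs (- g 0%N); rewrite Rabs_Ropp; lra.
exists (Rmax C (Rabs (g K.+1))) => N; rewrite leq_eqVlt => /orP [/eqP ->|/HC].
  by have := Rmax_r C (Rabs (g K.+1)); have := Rle_abs (- g K.+1); rewrite Rabs_Ropp; lra.
by have := Rmax_l C (Rabs (g K.+1)); lra.
Qed.

(* Equivalent to [mean_liminf_nonneg a] (lemma [mean_liminf_nonnegE]), but stable under
   shifting and regrouping the sequence. *)
Definition sums_above_slopes (a : nat -> R) : Prop :=
  forall eps, 0 < eps -> exists C, forall N, - eps * INR N - C <= partial_sum a N.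

Lemma LimInf_seq_ge0 (u : nat -> R) :
  Rbar_le 0 (LimInf_seq u) <-> forall eps, 0 < eps -> eventually (fun n => - eps < u n).
Proof.
split => [|H].
  have [l Hl] := ex_LimInf_seq u; rewrite (is_LimInf_seq_unique _ _ Hl).
  case: l Hl => [l||] Hl //= l_ge0 eps eps_gt0; last exact: Hl.
  have [_ [N HN]] := Hl (mkposreal eps eps_gt0).
  by exists N => n /HN /=; lra.
have H' eps : 0 < eps -> Rbar_le (- eps) (LimInf_seq u).
  move=> eps_gt0; rewrite -(LimInf_seq_const (- eps)); apply: LimInf_le.
  by have [N HN] := H eps eps_gt0; exists N => n /HN; lra.
case E: (LimInf_seq u) => [l||] //=; last by have := H' 1 Rlt_0_1; rewrite E.
apply: Rnot_lt_le => l_lt0.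
by have := H' (- l / 2) ltac:(lra); rewrite E /=; lra.
Qed.

Lemma Rlt_div_rE c x y : 0 < y -> (c < x / y <-> c * y < x).
Proof.
move=> y_gt0; have E : x / y * y = x by field; lra.
split => h; first by rewrite -E; apply: Rmult_lt_compat_r.
by apply: (Rmult_lt_reg_r y); rewrite // E.
Qed.

Lemma sums_above_slopes_means a :
  sums_above_slopes a <->
  forall eps, 0 < eps -> eventually (fun N => - eps < sum_f_R0 a N / INR N.+1).
Proof.
split => H eps eps_gt0.
  have [C HC] := H (eps / 2) ltac:(lra).
  have [N0 HN0] : exists N0 : nat, Rabs C * 2 < eps * INR N0.
    have [N0 ?] := INR_archimed eps (Rabs C * 2) eps_gt0.
    by exists N0; lra.
  exists N0 => N /le_INR le_N0N.
  rewrite Rlt_div_rE; last by apply: lt_0_INR; lia.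
  have := HC N.+1; rewrite -sum_f_R0_partial_sum S_INR.
  by have := Rle_abs C; nra.
have [N0 HN0] := H eps eps_gt0.
have [C HC] := prefix_bounded_below (partial_sum a) N0.
have C_ge0 : 0 <= C by have := HC 0%N (leq0n _); rewrite /=; lra.
exists C => N; have := pos_INR N; case: (leqP N N0) => [/HC|]; first nra.
case: N => [//|N] /ltP/le_S_n/HN0.
rewrite sum_f_R0_partial_sum Rlt_div_rE; last by apply: lt_0_INR; lia.
lra.
Qed.

Lemma mean_liminf_nonnegE a : mean_liminf_nonneg a <-> sums_above_slopes a.
Proof. by rewrite /mean_liminf_nonneg LimInf_seq_ge0 sums_above_slopes_means. Qed.

Lemma sums_above_slopes_shift a k :
  sums_above_slopes (fun j => a (j + k)%N) <-> sums_above_slopes a.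
Proof.
have Ek := pos_INR k.
split => H eps eps_gt0; have [C HC] := H eps eps_gt0.
  have [C0 HC0] := prefix_bounded_below (partial_sum a) k.
  exists (Rabs C + Rabs (partial_sum a k) + Rabs C0) => N.
  have := Rle_abs C; have := Rle_abs C0; have := Rle_abs (- partial_sum a k).
  have := Rabs_pos C; have := Rabs_pos C0; have := Rabs_pos (partial_sum a k).
  rewrite Rabs_Ropp; have := pos_INR N.
  case: (leqP k N) => [le_kN|/ltnW/HC0]; last nra.
  rewrite -(subnK le_kN) partial_sumD plus_INR; have := HC (N - k)%N; nra.
exists (C + eps * INR k + Rabs (partial_sum a k)) => N.
have := HC (N + k)%N; rewrite partial_sumD plus_INR.
have := Rle_abs (partial_sum a k); lra.
Qed.

Lemma sums_above_slopes_blocks (w v : nat -> R) (n : nat -> nat) B L :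
  (forall j, Rabs (w j) <= B) -> n 0%N = 0%N -> (forall t, n t < n t.+1 <= n t + L)%N ->
  (forall t, partial_sum v t = partial_sum w (n t)) ->
  sums_above_slopes w <-> sums_above_slopes v.
Proof.
move=> HB n0 n_step Hv.
have n_incr t : (n t < n t.+1)%N by case/andP: (n_step t).
have L_gt0 : 0 < INR L.
  by apply: lt_0_INR; have := n_step 0%N; lia.
have n_le t : INR (n t) <= INR L * INR t.
  rewrite -mult_INR; apply: le_INR; apply/leP; elim: t => [|t IH]; first by rewrite n0.
  by have := n_step t; lia.
have B_ge0 : 0 <= B by have := HB 0%N; have := Rabs_pos (w 0%N); lra.
split => H eps eps_gt0.
  have [C HC] := H (eps / INR L) ltac:(apply: Rdiv_lt_0_compat; lra).
  exists C => t; rewrite Hv.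
  have : eps / INR L * INR (n t) <= eps * INR t.
    apply: (Rmult_le_reg_l (INR L)) => //.
    have -> : INR L * (eps / INR L * INR (n t)) = eps * INR (n t) by field; lra.
    by have := n_le t; nra.
  by have := HC (n t); lra.
have [C HC] := H eps eps_gt0.
exists (C + INR L * B) => N.
have [t /andP [le_ntN lt_N]] := increasing_bracket n N n_incr ltac:(by rewrite n0).
rewrite -(subnK le_ntN) partial_sumD -Hv plus_INR.
have := HC t; have := partial_sum_ge (fun j => w (j + n t)%N) B (N - n t) (fun j => HB _).
have : INR (N - n t) <= INR L.
  by apply: le_INR; apply/leP; case/andP: (n_step t) => _; rewrite -ltnS; lia.
have : INR t <= INR (n t) by apply: le_INR; apply/leP; apply: increasing_ge_id.
have := pos_INR (N - n t); nra.
Qed.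

Lemma mean_liminf_nonneg_shift a k :
  mean_liminf_nonneg (fun j => a (j + k)%N) <-> mean_liminf_nonneg a.
Proof. by rewrite !mean_liminf_nonnegE sums_above_slopes_shift. Qed.

Lemma mean_liminf_nonneg_blocks (w v : nat -> R) (n : nat -> nat) B L :
  (forall j, Rabs (w j) <= B) -> n 0%N = 0%N -> (forall t, n t < n t.+1 <= n t + L)%N ->
  (forall t, partial_sum v t = partial_sum w (n t)) ->
  mean_liminf_nonneg w <-> mean_liminf_nonneg v.
Proof.
move=> HB n0 n_step Hv; rewrite !mean_liminf_nonnegE.
exact: sums_above_slopes_blocks HB n0 n_step Hv.
Qed.

Lemma foldr_Rplus_cat (a b : seq R) :
  foldr Rplus 0 (a ++ b) = (foldr Rplus 0 a + foldr Rplus 0 b).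
Proof. by elim: a => [|x a IH] /=; [lra | rewrite IH; lra]. Qed.

Definition weight_sum {X : Type} (w : X -> R) (qs : seq X) : R := foldr Rplus 0 (map w qs).

Lemma weight_sum_cat {X : Type} (w : X -> R) p q :
  weight_sum w (p ++ q) = (weight_sum w p + weight_sum w q).
Proof. by rewrite /weight_sum map_cat foldr_Rplus_cat. Qed.

Lemma partial_sum_nth {X : Type} (x0 : X) (w : X -> R) p :
  partial_sum (fun j => w (nth x0 p j)) (size p) = weight_sum w p.
Proof.
elim: p => [//|x p IH].
have -> : weight_sum w (x :: p) = (w x + weight_sum w p) by [].
rewrite [size _]/= -addn1 partial_sumD -IH.
have -> : partial_sum (fun j => w (nth x0 (x :: p) (j + 1))) (size p) =
          partial_sum (fun j => w (nth x0 p j)) (size p).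
  by apply: eq_partial_sum => j _; rewrite addn1.
by rewrite /=; lra.
Qed.

Lemma finite_fun_bounded {X : finType} (g : X -> R) : exists B, forall x, Rabs (g x) <= B.
Proof.
exists (foldr Rplus 0 [seq Rabs (g x) | x <- enum X]) => x.
have : x \in enum X by rewrite mem_enum.
elim: (enum X) => [//|y s IH] /=; rewrite in_cons.
have sum_ge0 : 0 <= foldr Rplus 0 [seq Rabs (g x) | x <- s].
  by elim: s {IH} => [|z s IH] /=; [lra | have := Rabs_pos (g z); lra].
by case/orP => [/eqP ->|/IH]; have := Rabs_pos (g y); lra.
Qed.

End MeanPayoff.

Lemma mean_liminf_nonneg_prepend {X : Type} (w : X -> R) p s :
  mean_liminf_nonneg (fun j => w (prepend p s j)) <-> mean_liminf_nonneg (fun j => w (s j)).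
Proof.
rewrite -(mean_liminf_nonneg_shift _ (size p)).
by have -> : (fun j => w (prepend p s (j + size p))) = (fun j => w (s j))
  by apply: functional_extensionality => j; rewrite prepend_tail.
Qed.

Definition mp_den {X : Type} (w : nat -> R) (d : T X) : Prop :=
  (mean_liminf_nonneg w /\ d = TEx) \/ (~ mean_liminf_nonneg w /\ d = TAll).

Lemma mp_den_exists {X : Type} w : exists d : T X, mp_den w d.
Proof. by case: (classic (mean_liminf_nonneg w)) => H; [exists TEx; left | exists TAll; right]. Qed.

Lemma mp_den_unique {X : Type} w (d1 d2 : T X) : mp_den w d1 -> mp_den w d2 -> d1 = d2.
Proof. by case=> [[? ->]|[? ->]] [[? ->]|[? ->]]. Qed.

Lemma mp_den_iff {X : Type} w1 w2 (d : T X) :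
  (mean_liminf_nonneg w1 <-> mean_liminf_nonneg w2) -> mp_den w1 d -> mp_den w2 d.
Proof. by move=> E [[? ->]|[? ->]]; [left|right]; rewrite -E. Qed.

Lemma mp_den_cast {X Y : Type} w (d : T X) (d' : T Y) :
  mp_den w d -> (d = TEx -> d' = TEx) -> (d = TAll -> d' = TAll) -> mp_den w d'.
Proof. by case=> [[? ->] /(_ erefl) ->|[? ->] _ /(_ erefl) ->]; [left|right]. Qed.

(** * Plays of deterministic games *)

Section Paths.
Context {m n : nat} {A : roMPG m n}.

Definition deterministic : Prop := forall s t t', edge A s t -> edge A s t' -> t = t'.

Definition stuck (t : 'I_n + pos A) : Prop :=
  match t with inl _ => True | inr q => forall t', ~ edge A (inr q) t' end.

Lemma path_chain_cat s p1 q p2 t :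
  path_chain A s (p1 ++ q :: p2) t <-> path_chain A s p1 (inr q) /\ path_chain A (inr q) p2 t.
Proof. by elim: p1 s => [|q1 p1 IH] s //=; rewrite IH; tauto. Qed.

Lemma path_chain_rcons s p q t :
  path_chain A s (rcons p q) t <-> path_chain A s p (inr q) /\ edge A (inr q) t.
Proof. by rewrite -cats1 path_chain_cat. Qed.

Lemma path_chain_edge {s p t} : path_chain A s p t -> exists t', edge A s t'.
Proof. by case: p => [|q p] /=; [exists t | case=> h _; exists (inr q)]. Qed.

Lemma inf_path_of_prefixes i s K :
  (forall N, K <= N -> path_chain A (inl i) (mkseq s N) (inr (s N))) -> inf_path A i s.
Proof.
move=> H.
have {}H N : path_chain A (inl i) (mkseq s N) (inr (s N)).
  case: (leqP K N) => [/H //|lt_NK].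
  have := H K (leqnn K); rewrite -(subnKC (ltnW lt_NK)).
  case E: (K - N) => [|k]; first by move: lt_NK; rewrite -subn_gt0 E.
  by rewrite /mkseq iotaD map_cat add0n /= path_chain_cat; case.
split; first exact: (H 0).
move=> j; have := H j.+1.
by rewrite -addn1 /mkseq iotaD map_cat add0n /= path_chain_cat addn1; case.
Qed.

Lemma inf_path_prepend i p s :
  (forall N, path_chain A (inl i) (p ++ mkseq s N) (inr (s N))) -> inf_path A i (prepend p s).
Proof.
move=> H; apply: (inf_path_of_prefixes i _ (size p)) => N le_pN.
by rewrite -(subnKC le_pN) mkseq_prepend addnC prepend_tail.
Qed.

Lemma no_maxpath_step {i qs t} : ~ (exists qs t, fin_maxpath A i qs t) ->
  path_chain A (inl i) qs t -> exists q q', t = inr q /\ edge A (inr q) (inr q').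
Proof.
move=> no_max h; case: t h => [j|q] h; first by case: no_max; exists qs, (inl j).
case: (classic (exists t', edge A (inr q) t')) => [[[j|q'] e]|no_succ].
- by case: no_max; exists (rcons qs q), (inl j); split => //; rewrite path_chain_rcons.
- by exists q, q'.
- by case: no_max; exists qs, (inr q); split => // t' e; apply: no_succ; exists t'.
Qed.

Lemma W_den_exists {i} : (exists t, edge A (inl i) t) -> exists d, W_den A i d.
Proof.
move=> [t0 e0].
case: (classic (exists qs t, fin_maxpath A i qs t)) => [[qs [t max]]|no_max].
  by exists (fin_den A qs t); left; exists qs, t.
have [q0 [_ [E0 _]]] := no_maxpath_step (qs := [::]) no_max e0.
have [s [s0 s_edge]] : exists s : nat -> pos A,
    s 0 = q0 /\ forall j, edge A (inr (s j)) (inr (s j.+1)).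
  apply: (dependent_choice_nat (fun q => exists qs, path_chain A (inl i) qs (inr q))
           (fun q q' => edge A (inr q) (inr q'))).
    by exists [::]; rewrite /= -E0.
  move=> q [qs h]; have [_ [q' [[<-] e]]] := no_maxpath_step no_max h.
  by exists q'; split => //; exists (rcons qs q); rewrite path_chain_rcons.
have [d mp] := mp_den_exists (X := 'I_n) (fun j => wt (s j)).
by exists d; right; exists s; split => //; split => //; rewrite s0 -E0.
Qed.

Hypothesis A_det : deterministic.

Lemma path_chain_det {s p1 p2 t1 t2} :
  path_chain A s p1 t1 -> path_chain A s p2 t2 -> size p1 = size p2 -> p1 = p2 /\ t1 = t2.
Proof.
elim: p1 s p2 => [|q1 p1 IH] s [|q2 p2] //=.
  by move=> h1 h2; split => //; apply: A_det _ _ _ h1 h2.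
move=> [h1 h1'] [h2 h2'] [eq_size]; case: (A_det _ _ _ h1 h2) h2' => <- h2'.
by have [-> ->] := IH _ _ h1' h2' eq_size.
Qed.

Lemma path_chain_stuck_unique {s p1 p2 t1 t2} :
  path_chain A s p1 t1 -> stuck t1 -> path_chain A s p2 t2 -> stuck t2 -> p1 = p2 /\ t1 = t2.
Proof.
elim: p1 s p2 => [|q1 p1 IH] s [|q2 p2] /=.
- by move=> h1 _ h2 _; split => //; apply: A_det _ _ _ h1 h2.
- move=> h1 stuck1 [h2 /path_chain_edge [t' h']] _.
  by rewrite (A_det _ _ _ h1 h2) in stuck1; case: (stuck1 t' h').
- move=> [h1 /path_chain_edge [t' h']] _ h2 stuck2.
  by rewrite (A_det _ _ _ h2 h1) in stuck2; case: (stuck2 t' h').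
- move=> [h1 h1'] stuck1 [h2 h2'] stuck2; case: (A_det _ _ _ h1 h2) h2' => <- h2'.
  by have [-> ->] := IH _ _ h1' stuck1 h2' stuck2.
Qed.

(* A repeated position would make the play loop forever, never reaching the exit. *)
Lemma path_chain_uniq {s qs x} : path_chain A s qs (inl x) -> uniq qs.
Proof.
elim: qs s => [|q qs IH] s //= [_ h]; rewrite (IH _ h) andbT; apply/negP => q_in.
case/path.splitPr: q_in h => p1 p2 h.
have [_ h'] := (path_chain_cat _ _ _ _ _).1 h.
have [/(congr1 size)] := path_chain_stuck_unique h I h' I.
by rewrite size_cat /=; lia.
Qed.

Lemma inf_path_prefix {i s} :
  inf_path A i s -> forall N, path_chain A (inl i) (mkseq s N) (inr (s N)).
Proof.
case=> h0 hS; elim=> [//|N IH].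
rewrite -addn1 /mkseq iotaD map_cat add0n /= path_chain_cat addn1.
by split; [exact: IH | exact: hS].
Qed.

Lemma inf_path_unique {i s1 s2} : inf_path A i s1 -> inf_path A i s2 -> s1 = s2.
Proof.
move=> [e1 e1S] [e2 e2S]; apply: functional_extensionality; elim=> [|j IH].
  by case: (A_det _ _ _ e1 e2).
by move: (e2S j); rewrite -IH => /(A_det _ _ _ (e1S j)) [].
Qed.

Lemma fin_inf_path_excl {i qs t s} : fin_maxpath A i qs t -> ~ inf_path A i s.
Proof.
move=> [h stuck_t] /[dup] hs [_ s_edge].
have [_ E] := path_chain_det h (inf_path_prefix hs (size qs)) (esym (size_mkseq _ _)).
by rewrite E in stuck_t; case: (stuck_t _ (s_edge (size qs))).
Qed.

Lemma W_den_unique {i d1 d2} : W_den A i d1 -> W_den A i d2 -> d1 = d2.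
Proof.
case=> [[qs1 [t1 [[h1 stuck1] ->]]]|[s1 [hs1 mp1]]] [[qs2 [t2 [[h2 stuck2] ->]]]|[s2 [hs2 mp2]]].
- by have [-> ->] := path_chain_stuck_unique h1 stuck1 h2 stuck2.
- by case: (fin_inf_path_excl (conj h1 stuck1) hs2).
- by case: (fin_inf_path_excl (conj h2 stuck2) hs1).
- by rewrite (inf_path_unique hs1 hs2) in mp1; apply: mp_den_unique mp1 mp2.
Qed.

Lemma Wmp_eq {i d} : W_den A i d -> Wmp A i = d.
Proof.
move=> H; exact: W_den_unique (epsilon_spec (inhabits TEx) (W_den A i) (ex_intro _ d H)) H.
Qed.

End Paths.

Arguments deterministic {m n} A.
Arguments stuck {m n} A t.

Lemma Wmp_spec {m n} {A : roMPG m n} i : is_roPG A -> W_den A i (Wmp A i).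
Proof.
move=> [[entr _] A_det]; have [t [e _]] := entr i.
by have [d W] := W_den_exists (ex_intro _ t e); rewrite (Wmp_eq A_det W).
Qed.

Lemma path_chain_last {m n} (A : roMPG m n) s qs t :
  path_chain A s qs t -> edge A (last s (map inr qs)) t.
Proof. by elim: qs s => [//|q qs IH] s /= [_ /IH]. Qed.

Lemma exit_pred_unique {m n} {A : roMPG m n} {j s s'} :
  is_roPG A -> edge A s (inl j) -> edge A s' (inl j) -> s = s'.
Proof. by case=> [[_ H] _]; apply: H. Qed.

Lemma path_chain_map {m n m' n'} (A : roMPG m n) (B : roMPG m' n') (h : pos A -> pos B)
    (h_edge : forall q q', edge A (inr q) (inr q') -> edge B (inr (h q)) (inr (h q')))
    s qs x s' y :
  path_chain A s qs x ->
  (forall q, edge A s (inr q) -> edge B s' (inr (h q))) ->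
  (edge A s x -> edge B s' y) ->
  (forall q, edge A (inr q) x -> edge B (inr (h q)) y) ->
  path_chain B s' (map h qs) y.
Proof.
elim: qs s s' => [|q qs IH] s s' /=; first by move=> e _ /(_ e).
move=> [e c] hs _ hx; split; first exact: hs.
exact: IH c (h_edge q) (hx q) hx.
Qed.

(** * Parallel and sequential composition *)

Section Embedding.
Context {m n m' n' : nat} (A : roMPG m n) (B : roMPG m' n').
Variables (ei : 'I_m -> 'I_m') (eo : 'I_n -> 'I_n') (ep : pos A -> pos B).

Definition embed_src (s : 'I_m + pos A) : 'I_m' + pos B :=
  match s with inl i => inl (ei i) | inr q => inr (ep q) end.
Definition embed_tgt (t : 'I_n + pos A) : 'I_n' + pos B :=
  match t with inl j => inl (eo j) | inr q => inr (ep q) end.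

Hypothesis embed_edge : forall s t, edge A s t -> edge B (embed_src s) (embed_tgt t).
Hypothesis embed_succ : forall q t', edge B (inr (ep q)) t' -> exists t, edge A (inr q) t.
Hypothesis embed_role : forall q, role (ep q) = role q.
Hypothesis embed_wt : forall q, wt (ep q) = wt q.

Lemma W_den_embed i d : W_den A i d -> W_den B (ei i) (Tmap eo d).
Proof.
case=> [[qs [t [[h stuck_t] ->]]]|[s [[e0 eS] mp]]].
  left; exists (map ep qs), (embed_tgt t); split; first split.
  - apply: (path_chain_map _ _ ep (fun q q' => embed_edge (inr q) (inr q')) _ _ _ _ _ h).
    + by move=> q; apply: (embed_edge (inl i) (inr q)).
    + exact: (embed_edge (inl i) t).
    + by move=> q; apply: (embed_edge (inr q) t).
  - case: t {h} stuck_t => [//|q] stuck_q t' /embed_succ [t0 e0].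
    exact: stuck_q e0.
  - case: t {h stuck_t} => [j|q] /=; last by rewrite embed_role; case: (role q).
    by rewrite -map_comp (eq_map embed_wt); case: qs.
right; exists (fun j => ep (s j)); split.
  by split; [exact: embed_edge _ _ e0 | move=> j; exact: embed_edge _ _ (eS j)].
apply: (mp_den_cast _ d) => [|-> //|-> //].
by have -> : (fun j => wt (ep (s j))) = (fun j => wt (s j))
  by apply: functional_extensionality => j; apply: embed_wt.
Qed.

End Embedding.

Section ParallelComposition.
Context {m1 n1 m2 n2 : nat} (C : roMPG m1 n1) (D : roMPG m2 n2).

Lemma rosum_deterministic : deterministic C -> deterministic D -> deterministic (rosum C D).
Proof.
move=> C_det D_det s t t' [[sc [tc [e [-> ->]]]]|[sd [td [e [-> ->]]]]]
  [[sc' [tc' [e' [E ->]]]]|[sd' [td' [e' [E ->]]]]].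
- have Esc : sc = sc'.
    by case: sc sc' E {e e'} => [a|a] [b|b] //= [] => [/ord_inj|] ->.
  by rewrite -Esc in e'; rewrite (C_det _ _ _ e e').
- by case: sc sd' E {e e'} => [a|a] [b|b] //= [] E; have := ltn_ord a; lia.
- by case: sd sc' E {e e'} => [a|a] [b|b] //= [] E; have := ltn_ord b; lia.
- have Esd : sd = sd'.
    by case: sd sd' E {e e'} => [a|a] [b|b] //= [] => [/addnI /ord_inj|] ->.
  by rewrite -Esd in e'; rewrite (D_det _ _ _ e e').
Qed.

Hypotheses (C_roPG : is_roPG C) (D_roPG : is_roPG D).

Lemma Wmp_rosum : Wmp (rosum C D) = Ssum (Wmp C) (Wmp D).
Proof.
have CD_det := rosum_deterministic C_roPG.2 D_roPG.2.
apply: functional_extensionality => i; rewrite /Ssum -{1}(splitK i).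
case: (split i) => [a|b] /=; apply: (Wmp_eq CD_det).
- apply: (W_den_embed C (rosum C D) (lshift m2) (lshift n2) (fun q => inl q) _ _ _ _ _ _
           (Wmp_spec a C_roPG)) => //.
  + by move=> s t e; left; exists s, t; split => //; case: s {e}; case: t.
  + move=> q t' [[[x|x] [tc [e [//= [->] _]]]]|[[x|x] [td [e [//]]]]].
    by exists tc.
- apply: (W_den_embed D (rosum C D) (@rshift m1 m2) (@rshift n1 n2) (fun q => inr q) _ _ _ _ _ _
           (Wmp_spec b D_roPG)) => //.
  + by move=> s t e; right; exists s, t; split => //; case: s {e}; case: t.
  + move=> q t' [[[x|x] [tc [e [//]]]]|[[x|x] [td [e [//= [->] _]]]]].
    by exists td.
Qed.

End ParallelComposition.

Section SequentialComposition.
Context {m l n : nat} (C : roMPG m l) (D : roMPG l n).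
Notation CD := (roseq C D).

Lemma seq_src_inj : injective (seq_src C D).
Proof. by case=> [a|a] [b|b] // [->]. Qed.

Lemma roseq_edge_C sc t : edge CD (seq_src C D sc) t ->
  (exists qc, t = inr (inl qc) /\ edge C sc (inr qc)) \/
  (exists j td, t = seq_tgt C D td /\ edge C sc (inl j) /\ edge D (inl j) td).
Proof.
case=> [[sc' [qc [/seq_src_inj <- [-> e]]]]|[[qd [td [E _]]]|
        [sc' [td [j [/seq_src_inj <- [-> e]]]]]]].
- by left; exists qc.
- by case: sc E.
- by right; exists j, td.
Qed.

Lemma roseq_edge_D qd t :
  edge CD (inr (inr qd)) t -> exists td, t = seq_tgt C D td /\ edge D (inr qd) td.
Proof.
case=> [[sc [qc [E _]]]|[[qd' [td [[<-] [-> e]]]]|[sc [td [j [E _]]]]]].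
- by case: sc E.
- by exists td.
- by case: sc E.
Qed.

Lemma roseq_src s : (exists sc, s = seq_src C D sc) \/ exists qd, s = inr (inr qd).
Proof.
by case: s => [i|[qc|qd]]; [left; exists (inl i) | left; exists (inr qc) | right; exists qd].
Qed.

Lemma roseq_deterministic : deterministic C -> deterministic D -> deterministic CD.
Proof.
move=> C_det D_det s t t'; case: (roseq_src s) => [[sc ->]|[qd ->]].
  move=> /roseq_edge_C [[qc [-> e]]|[j [td [-> [e1 e2]]]]]
         /roseq_edge_C [[qc' [-> e']]|[j' [td' [-> [e1' e2']]]]].
  - by case: (C_det _ _ _ e e') => ->.
  - by have := C_det _ _ _ e e1'.
  - by have := C_det _ _ _ e1 e'.
  - by case: (C_det _ _ _ e1 e1') e2' => <- /(D_det _ _ _ e2) ->.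
by move=> /roseq_edge_D [td [-> e]] /roseq_edge_D [td' [-> /(D_det _ _ _ e) ->]].
Qed.

Lemma roseq_stuck_C q : stuck C (inr q) -> stuck CD (inr (inl q)).
Proof.
move=> stuck_q t /(roseq_edge_C (inr q)) [[qc [_ e]]|[j [td [_ [e _]]]]]; exact: stuck_q e.
Qed.

Lemma roseq_stuck_D t : stuck D t -> stuck CD (seq_tgt C D t).
Proof. by case: t => [//|q] stuck_q t /roseq_edge_D [td [_ e]]; apply: stuck_q e. Qed.

Lemma roseq_path_C {s qs q} : path_chain C s qs (inr q) ->
  path_chain CD (seq_src C D s) (map inl qs) (inr (inl q)).
Proof.
move=> h; apply: (path_chain_map C CD (fun q => inl q) _ _ _ _ _ _ h).
- by move=> a b e; left; exists (inr a), b.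
- by move=> b e; left; exists s, b.
- by move=> e; left; exists s, q.
- by move=> b e; left; exists (inr b), q.
Qed.

Lemma roseq_path_D {q qs t} : path_chain D (inr q) qs t ->
  path_chain CD (inr (inr q)) (map inr qs) (seq_tgt C D t).
Proof.
move=> h; apply: (path_chain_map D CD (fun q => inr q) _ _ _ _ _ _ h).
- by move=> a b e; right; left; exists a, (inr b).
- by move=> b e; right; left; exists q, (inr b).
- by move=> e; right; left; exists q, t.
- by move=> b e; right; left; exists b, t.
Qed.

Lemma roseq_path_cat {s qs j qsD t} : path_chain C s qs (inl j) -> path_chain D (inl j) qsD t ->
  path_chain CD (seq_src C D s) (map inl qs ++ map inr qsD) (seq_tgt C D t).
Proof.
case: qsD => [|qd qsD] hC hD.
  rewrite cats0; apply: (path_chain_map C CD (fun q => inl q) _ _ _ _ _ _ hC).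
  - by move=> a b e; left; exists (inr a), b.
  - by move=> b e; left; exists s, b.
  - by move=> e; right; right; exists s, t, j.
  - by move=> b e; right; right; exists (inr b), t, j.
case: hD => e hD; rewrite /= path_chain_cat; split; last exact: roseq_path_D.
apply: (path_chain_map C CD (fun q => inl q) _ _ _ _ _ _ hC).
- by move=> a b e'; left; exists (inr a), b.
- by move=> b e'; left; exists s, b.
- by move=> e'; right; right; exists s, (inr qd), j.
- by move=> b e'; right; right; exists (inr b), (inr qd), j.
Qed.

Lemma Scomp_fin_den (f : 'I_m -> T 'I_l) (g : 'I_l -> T 'I_n) i qs j qsD tD :
  f i = fin_den C qs (inl j) -> g j = fin_den D qsD tD ->
  Scomp f g i = fin_den CD (map inl qs ++ map inr qsD) (seq_tgt C D tD).
Proof.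
have wl : map (@wt _ _ CD) (map inl qs) = map wt qs by rewrite -map_comp.
have wr : map (@wt _ _ CD) (map inr qsD) = map wt qsD by rewrite -map_comp.
rewrite /Scomp => -> gj; case: tD gj => [k|q] /=; last first.
  by case: qs {wl} => [|q0 qs] -> /=; case: (role q).
rewrite map_cat wl wr foldr_Rplus_cat.
by case: qs {wl} => [|q0 qs] -> /=; case: qsD {wr} => [|q1 qsD] /=; rewrite ?Rplus_0_l ?Rplus_0_r.
Qed.

Hypotheses (C_roPG : is_roPG C) (D_roPG : is_roPG D).

Lemma W_den_roseq i : W_den CD i (Scomp (Wmp C) (Wmp D) i).
Proof.
case: (Wmp_spec i C_roPG) => [[qs [[j|q] [[hC stuck_q] EC]]]|[s [[e0 eS] mp]]].
- case: (Wmp_spec j D_roPG) => [[qsD [tD [[hD stuck_tD] ED]]]|[s [hs mp]]].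
    left; exists (map inl qs ++ map inr qsD), (seq_tgt C D tD).
    split; last exact: Scomp_fin_den EC ED.
    by split; [apply: (roseq_path_cat hC hD) | apply: roseq_stuck_D].
  right; exists (prepend (map inl qs) (fun k => inr (s k))); split.
    apply: inf_path_prepend => N.
    have -> : mkseq (fun k => inr (s k)) N = map (@inr (pos C) (pos D)) (mkseq s N)
      by rewrite /mkseq -map_comp.
    exact: (roseq_path_cat hC (inf_path_prefix hs N)).
  apply: (mp_den_cast _ (Wmp D j)); last 2 first.
  + by rewrite /Scomp EC => E; case: qs {hC} EC => [|q0 qs] _ /=; rewrite E.
  + by rewrite /Scomp EC => E; case: qs {hC} EC => [|q0 qs] _ /=; rewrite E.
  apply: (mp_den_iff _ _ _ _ mp); apply: iff_sym.
  exact: (mean_liminf_nonneg_prepend (@wt _ _ CD)).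
- left; exists (map inl qs), (inr (inl q)); split.
    by split; [apply: (roseq_path_C hC) | apply: roseq_stuck_C stuck_q].
  by rewrite /Scomp EC /=; case: (role q).
right; exists (fun k => inl (s k)); split.
  by split => [|k]; left; [exists (inl i), (s 0) | exists (inr (s k)), (s k.+1)].
by apply: (mp_den_cast _ (Wmp C i) _ mp); rewrite /Scomp => ->.
Qed.

Lemma Wmp_roseq : Wmp CD = Scomp (Wmp C) (Wmp D).
Proof.
apply: functional_extensionality => i.
exact: (Wmp_eq (roseq_deterministic C_roPG.2 D_roPG.2) (W_den_roseq i)).
Qed.

End SequentialComposition.

(** * Trace *)

Section TraceGame.
Context {l m n : nat} {E : roMPG (l + m) (l + n)}.
Notation RE := (rotrace E).

Definition lift_src (s : 'I_m + pos E) : 'I_(l + m) + pos E :=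
  match s with inl i => inl (rshift l i) | inr q => inr q end.
Definition lift_tgt (t : 'I_n + pos E) : 'I_(l + n) + pos E :=
  match t with inl j => inl (rshift l j) | inr q => inr q end.

(* Paths of [rotrace E] between arbitrary ends of [E]: each step may pass through the
   looped-back exits/entrances [l]. *)
Fixpoint tr_path (s : 'I_(l + m) + pos E) (qs : seq (pos E)) (t : 'I_(l + n) + pos E) : Prop :=
  match qs with
  | [::] => exists ks, tr_chain E s ks t
  | q :: qs' => (exists ks, tr_chain E s ks (inr q)) /\ tr_path (inr q) qs' t
  end.

Lemma path_chain_rotraceE s qs t : path_chain RE s qs t <-> tr_path (lift_src s) qs (lift_tgt t).
Proof. by elim: qs s => [|q qs IH] s //=; rewrite IH. Qed.

Lemma tr_path_of_path_chain {s qs t} : path_chain E s qs t -> tr_path s qs t.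
Proof.
elim: qs s => [|q qs IH] s /=; first by exists [::].
by case=> e h; split; [exists [::] | apply: IH].
Qed.

Lemma tr_chain_cat {s ks k ks' t} : tr_chain E s ks (inl (lshift n k)) ->
  tr_chain E (inl (lshift m k)) ks' t -> tr_chain E s (rcons ks k ++ ks') t.
Proof. by elim: ks s => [|k0 ks IH] s /=; [split | case=> e h h'; split => //; apply: IH]. Qed.

Lemma tr_path_cat {s qs k qs' t} : tr_path s qs (inl (lshift n k)) ->
  tr_path (inl (lshift m k)) qs' t -> tr_path s (qs ++ qs') t.
Proof.
elim: qs s => [|q qs IH] s /=; last by case=> h1 h2 h3; split => //; apply: IH.
case=> ks h; case: qs' => [|q' qs'] /=.
  by case=> ks' h'; exists (rcons ks k ++ ks'); apply: tr_chain_cat.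
by case=> [[ks' h'] h2]; split => //; exists (rcons ks k ++ ks'); apply: tr_chain_cat.
Qed.

Lemma tr_path_prefix {s p1 q p2 t} : tr_path s (p1 ++ q :: p2) t -> tr_path s p1 (inr q).
Proof. by elim: p1 s => [|q1 p1 IH] s /=; [case | case=> h1 /IH]. Qed.

Lemma tr_chain_edge {s ks t} : tr_chain E s ks t -> exists t', edge E s t'.
Proof. by case: ks => [|k ks] /=; [exists t | case=> e _; exists (inl (lshift n k))]. Qed.

Lemma rotrace_stuck q : stuck E (inr q) -> stuck RE (inr q).
Proof. by move=> stuck_q t [ks /tr_chain_edge [t' e]]; apply: stuck_q e. Qed.

Lemma tr_chain_det {s ks ks' t t'} : deterministic E ->
  tr_chain E s ks (lift_tgt t) -> tr_chain E s ks' (lift_tgt t') -> t = t'.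
Proof.
have lift_l k t0 : lift_tgt t0 <> inl (lshift n k).
  by case: t0 => [j|q] //= [] Ejk; have := ltn_ord k; lia.
have lift_inj : injective lift_tgt.
  by case=> [a|a] [b|b] //= [] => [/addnI /ord_inj|] ->.
move=> E_det; elim: ks s ks' => [|k ks IH] s [|k' ks'] /=.
- by move=> e e'; apply: lift_inj; apply: E_det e e'.
- by move=> e [e' _]; case: (lift_l k' t); apply: E_det e e'.
- by move=> [e _] e'; case: (lift_l k t'); apply: E_det e' e.
- move=> [e h] [e' h']; case: (E_det _ _ _ e e') h' => /ord_inj <-.
  exact: IH.
Qed.

Lemma rotrace_deterministic : deterministic E -> deterministic RE.
Proof. by move=> E_det s t t' [ks h] [ks' h']; apply: tr_chain_det E_det h h'. Qed.

End TraceGame.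

Section TraceSemantics.
Context {l m n : nat} (f : 'I_(l + m) -> T 'I_(l + n)) (i : 'I_m).
Notation u := (tr_seq f i).

Definition next_entrance (v : T 'I_(l + n)) : option 'I_l :=
  match v with
  | TExit x | TW _ x => match split x with inl k => Some k | inr _ => None end
  | _ => None
  end.

Lemma tr_nextE v :
  tr_next f v = match next_entrance v with Some k => Some (f (lshift m k)) | None => None end.
Proof. by case: v => [x|r x||] //=; case: (split x). Qed.

Lemma tr_seq_none_le {j j'} : u j = None -> (j <= j') -> u j' = None.
Proof.
move=> uj; elim: j' => [|j' IH]; first by rewrite leqn0 => /eqP <-.
by rewrite leq_eqVlt => /orP [/eqP <- //|]; rewrite ltnS => /IH /= ->.
Qed.

Definition stops_at K := exists v, u K = Some v /\ next_entrance v = None.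

Lemma stops_at_next {K} : stops_at K -> u K.+1 = None.
Proof. by case=> v [uK nv] /=; rewrite uK tr_nextE nv. Qed.

Lemma stops_at_unique {K1 K2} : stops_at K1 -> stops_at K2 -> K1 = K2.
Proof.
move=> s1 s2; case: (ltngtP K1 K2) => // lt_K.
- by case: s2 => v []; rewrite (tr_seq_none_le (stops_at_next s1) lt_K).
- by case: s1 => v []; rewrite (tr_seq_none_le (stops_at_next s2) lt_K).
Qed.

Definition tr_weight K := sum_f_R0 (fun j => weight_of (u j)) K.

(* The four finite clauses of [Strace_den], for a sequence stopping at [K] with [u K = Some v]. *)
Definition fin_trace_den K (v : T 'I_(l + n)) (d : T 'I_n) : Prop :=
  (v = TEx /\ d = TEx) \/ (v = TAll /\ d = TAll) \/
  (exists x k, v = TExit x /\ split x = inr k /\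
     (((forall j, (j < K) -> ~ is_wl (u j)) /\ d = TExit k) \/
      ((exists j, (j < K) /\ is_wl (u j)) /\ d = TW (tr_weight K) k))) \/
  (exists r x k, v = TW r x /\ split x = inr k /\ d = TW (tr_weight K) k).

Definition inf_trace_den (d : T 'I_n) : Prop :=
  (forall j, u j <> None) /\
  exists phi : nat -> nat,
    (forall t, (phi t < phi t.+1)) /\
    (forall j, is_wl (u j) <-> exists t, phi t = j) /\
    mp_den (fun t => weight_of (u (phi t))) d.

Lemma Strace_denE d : Strace_den f i d <->
  (exists K v, u K = Some v /\ next_entrance v = None /\ fin_trace_den K v d) \/ inf_trace_den d.
Proof.
split.
  case=> [[K [uK ->]]|[[K [uK ->]]|[[K [x [k [uK [xk dK]]]]]|[[K [r [x [k [uK [xk ->]]]]]]|inf]]]].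
  - by left; exists K, TEx; do 2 split => //; left.
  - by left; exists K, TAll; do 2 split => //; right; left.
  - by left; exists K, (TExit x); rewrite /= xk; do 2 split => //; right; right; left; exists x, k.
  - left; exists K, (TW r x); rewrite /= xk; do 2 split => //.
    by right; right; right; exists r, x, k.
  - by right.
case=> [[K [v [uK [_ F]]]]|inf]; last by right; right; right; right.
case: F uK => [[-> ->]|[[-> ->]|[[x [k [-> [xk dK]]]]|[r [x [k [-> [xk ->]]]]]]]] uK.
- by left; exists K.
- by right; left; exists K.
- by right; right; left; exists K, x, k.
- by right; right; right; left; exists K, r, x, k.
Qed.

Lemma fin_trace_den_unique K v d1 d2 : fin_trace_den K v d1 -> fin_trace_den K v d2 -> d1 = d2.
Proof.
case=> [[-> ->]|[[-> ->]|[[x [k [-> [xk dK]]]]|[r [x [k [-> [xk ->]]]]]]]];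
case=> [[E ->]|[[E ->]|[[x' [k' [E [xk' dK']]]]|[r' [x' [k' [E [xk' ->]]]]]]]] //.
- case: E xk' dK' => <-; rewrite xk => -[<-] dK'.
  case: dK dK' => [[no_wl ->]|[[j [lt_j wl]] ->]] [[no_wl' ->]|[[j' [lt_j' wl']] ->]] //.
  + by case: (no_wl _ lt_j' wl').
  + by case: (no_wl' _ lt_j wl).
- by case: E xk' => _ <-; rewrite xk => -[->].
Qed.

Lemma Strace_den_unique {d1 d2} : Strace_den f i d1 -> Strace_den f i d2 -> d1 = d2.
Proof.
move=> /Strace_denE [[K1 [v1 [u1 [n1 F1]]]]|[none1 [p1 [p1_incr [p1_enum mp1]]]]]
       /Strace_denE [[K2 [v2 [u2 [n2 F2]]]]|[none2 [p2 [p2_incr [p2_enum mp2]]]]].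
- have EK := stops_at_unique (ex_intro _ v1 (conj u1 n1)) (ex_intro _ v2 (conj u2 n2)).
  rewrite -EK u1 in u2; case: u2 F2 => <-; rewrite -EK.
  exact: fin_trace_den_unique F1.
- by case: (none2 _ (stops_at_next (ex_intro _ v1 (conj u1 n1)))).
- by case: (none1 _ (stops_at_next (ex_intro _ v2 (conj u2 n2)))).
- rewrite (increasing_enum_unique _ _ _ p1_incr p2_incr p1_enum p2_enum) in mp1.
  exact: mp_den_unique mp1 mp2.
Qed.

Lemma Strace_eq d : Strace_den f i d -> Strace f i = d.
Proof.
move=> H.
exact: (Strace_den_unique (epsilon_spec (inhabits TEx) (Strace_den f i) (ex_intro _ d H)) H).
Qed.

End TraceSemantics.

Arguments Strace_eq {l m n f i d}.

Section TraceRun.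
Context {l m n : nat} (E : roMPG (l + m) (l + n)) (i : 'I_m).
Hypothesis E_roPG : is_roPG E.
Notation f := (Wmp E).
Notation u := (tr_seq (Wmp E) i).
Notation RE := (rotrace E).

Lemma next_entrance_fin_den qs (x : 'I_(l + n)) :
  next_entrance (fin_den E qs (inl x)) =
  match split x with inl k => Some k | inr _ => None end.
Proof. by case: qs. Qed.

(* The positions visited by [E] from entrance [e] to the exit [f e] leads to. *)
Definition segment (e : 'I_(l + m)) : seq (pos E) :=
  epsilon (inhabits [::])
    (fun qs => exists x, path_chain E (inl e) qs (inl x) /\ f e = fin_den E qs (inl x)).

Lemma segment_spec {e k} : next_entrance (f e) = Some k ->
  path_chain E (inl e) (segment e) (inl (lshift n k)) /\
  f e = fin_den E (segment e) (inl (lshift n k)).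
Proof.
move=> fe_k.
have [|x [h fe]] := epsilon_spec (inhabits [::])
  (fun qs => exists x, path_chain E (inl e) qs (inl x) /\ f e = fin_den E qs (inl x)).
  case: (Wmp_spec e E_roPG) fe_k => [[qs [[x|q] [[h _] ->]]]|[s [_ [[_ ->]|[_ ->]]]]] //.
    by exists qs, x.
  by rewrite /=; case: (role q).
move: fe_k; rewrite -/(segment e) in h fe *; rewrite fe next_entrance_fin_den.
case E_x: (split x) => [k'|//] [<-].
have E_xk : x = lshift n k' by rewrite -(splitK x) E_x.
by rewrite -E_xk.
Qed.

Fixpoint entrance (K : nat) : 'I_(l + m) :=
  if K is K'.+1 then
    if next_entrance (f (entrance K')) is Some k then lshift m k else entrance K'
  else rshift l i.

Definition continues K := forall j, (j < K) -> next_entrance (f (entrance j)) <> None.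

Lemma continuesW {K} : continues K.+1 -> continues K.
Proof. by move=> c j lt_j; apply/c/ltnW. Qed.

Lemma tr_seq_entrance {K} : continues K -> u K = Some (f (entrance K)).
Proof.
elim: K => [//|K IH] c /=; rewrite IH ?tr_nextE; last exact: continuesW c.
by case: (next_entrance (f (entrance K))) (c K (ltnSn K)).
Qed.

Definition tr_prefix K := flatten [seq segment (entrance j) | j <- iota 0 K].

Lemma tr_prefixS K : tr_prefix K.+1 = tr_prefix K ++ segment (entrance K).
Proof. by rewrite /tr_prefix -addn1 iotaD map_cat flatten_cat /= cats0. Qed.

Lemma tr_prefix_extends K : exists r, tr_prefix K.+1 = tr_prefix K ++ r.
Proof. by exists (segment (entrance K)); apply: tr_prefixS. Qed.

Lemma tr_path_tr_prefix {K qs t} : continues K ->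
  tr_path (inl (entrance K)) qs t -> tr_path (inl (rshift l i)) (tr_prefix K ++ qs) t.
Proof.
elim: K qs => [//|K IH] qs c /=.
case E_K: (next_entrance (f (entrance K))) (c K (ltnSn K)) => [k|//] _ h.
rewrite tr_prefixS -catA; apply: IH; first exact: continuesW.
have [h_seg _] := segment_spec E_K.
exact: tr_path_cat (tr_path_of_path_chain h_seg) h.
Qed.

Lemma path_chain_rotrace_prefix {K qs t} : continues K ->
  path_chain E (inl (entrance K)) qs (lift_tgt t) -> path_chain RE (inl i) (tr_prefix K ++ qs) t.
Proof.
by move=> c h; apply/path_chain_rotraceE; apply: tr_path_tr_prefix c (tr_path_of_path_chain h).
Qed.

Lemma weight_segment {e k} : next_entrance (f e) = Some k ->
  weight_of (Some (f e)) = weight_sum wt (segment e).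
Proof. by move=> /segment_spec [_ ->]; case: (segment e). Qed.

Lemma is_wl_segment {e k} : next_entrance (f e) = Some k ->
  is_wl (Some (f e)) <-> segment e <> [::].
Proof.
move=> /segment_spec [_ ->]; case: (segment e) => [|q qs] /=; split => //.
- by move=> [r [x [k' [Ev _]]]]; discriminate Ev.
- by move=> _; exists (weight_sum wt (q :: qs)), (lshift n k), k; rewrite (unsplitK (inl k)).
Qed.

Lemma next_entranceP {K j} :
  continues K -> (j < K) -> exists k, next_entrance (f (entrance j)) = Some k.
Proof. by move=> c /c; case: (next_entrance _) => [k|//] _; exists k. Qed.

Lemma partial_sum_tr_weight {K} : continues K ->
  partial_sum (fun j => weight_of (u j)) K = weight_sum wt (tr_prefix K).
Proof.
elim: K => [//|K IH] c /=; rewrite IH ?tr_prefixS ?weight_sum_cat; last exact: continuesW.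
have [k E_K] := next_entranceP c (ltnSn K).
by rewrite (tr_seq_entrance (continuesW c)) (weight_segment E_K).
Qed.

Lemma tr_weight_entrance {K} : continues K ->
  tr_weight (Wmp E) i K = (weight_sum wt (tr_prefix K) + weight_of (Some (f (entrance K))))%R.
Proof.
by move=> c; rewrite /tr_weight sum_f_R0_partial_sum /= partial_sum_tr_weight // tr_seq_entrance.
Qed.

Lemma is_wl_tr_seq {K j} : continues K -> (j < K) ->
  is_wl (u j) <-> segment (entrance j) <> [::].
Proof.
move=> c lt_j; have [k E_j] := next_entranceP c lt_j.
rewrite tr_seq_entrance; first exact: is_wl_segment E_j.
by move=> j' lt_j'; apply/c/(ltn_trans lt_j').
Qed.

Lemma tr_prefix_nil {K} : continues K ->
  tr_prefix K = [::] <-> forall j, (j < K) -> ~ is_wl (u j).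
Proof.
elim: K => [|K IH] c; first by split.
rewrite tr_prefixS; have IH' := IH (continuesW c).
split.
  move=> /nilP; rewrite /nilp size_cat addn_eq0 => /andP [/nilP /IH' no_wl /nilP seg_nil] j.
  rewrite ltnS leq_eqVlt => /orP [/eqP ->|/no_wl //].
  by move/(is_wl_tr_seq c (ltnSn K)); rewrite seg_nil.
move=> no_wl; have -> /= : tr_prefix K = [::] by apply/IH' => j lt_j; apply/no_wl/ltnW.
by apply: NNPP => /(is_wl_tr_seq c (ltnSn K)); apply: no_wl.
Qed.

Lemma Strace_den_stops_exit K qs k : continues K ->
  f (entrance K) = fin_den E qs (inl (rshift l k)) ->
  Strace_den f i (fin_den RE (tr_prefix K ++ qs) (inl k)).
Proof.
move=> c fK; apply/Strace_denE; left; exists K, (f (entrance K)).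
have split_k : split (rshift l k) = inr k := unsplitK (inr k).
split; first exact: tr_seq_entrance c.
split; first by rewrite fK next_entrance_fin_den split_k.
rewrite /fin_trace_den tr_weight_entrance // fK.
case: qs {fK} => [|q qs]; last first.
  right; right; right; exists (weight_sum wt (q :: qs)), (rshift l k), k; do 2 split => //.
  have -> : fin_den RE (tr_prefix K ++ q :: qs) (inl k) =
            TW (weight_sum wt (tr_prefix K ++ q :: qs)) k by case: (tr_prefix K).
  by rewrite weight_sum_cat.
right; right; left; exists (rshift l k), k; do 2 split => //; rewrite cats0.
case E0: (tr_prefix K) => [|q0 p0]; first by left; split => //; apply/(tr_prefix_nil c).
right; split; last by rewrite /= Rplus_0_r.
apply: NNPP => no_wl; suff : tr_prefix K = [::] by rewrite E0.
by apply/(tr_prefix_nil c) => j lt_j wl; apply: no_wl; exists j.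
Qed.

Lemma Strace_stops K : continues K -> next_entrance (f (entrance K)) = None ->
  Strace f i = Wmp RE i.
Proof.
move=> c stopK; have RE_det := rotrace_deterministic E_roPG.2.
have Strace_stop d : fin_trace_den f i K (f (entrance K)) d -> Strace f i = d.
  move=> F; apply/Strace_eq/Strace_denE; left.
  by exists K, (f (entrance K)); rewrite tr_seq_entrance.
case: (Wmp_spec (entrance K) E_roPG) => [[qs [[x|q] [[h stuck_t] fK]]]|[s [hs mp]]].
- case E_x: (split x) => [k|k]; first by move: stopK; rewrite fK next_entrance_fin_den E_x.
  have E_xk : x = rshift l k by rewrite -(splitK x) E_x.
  rewrite E_xk in h fK; rewrite (Strace_eq (Strace_den_stops_exit _ _ _ c fK)).
  symmetry; apply: (Wmp_eq RE_det); left; exists (tr_prefix K ++ qs), (inl k).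
  by do 2 split => //; apply: (path_chain_rotrace_prefix (t := inl k) c h).
- rewrite (Strace_stop (fin_den RE (tr_prefix K ++ qs) (inr q))).
    symmetry; apply: (Wmp_eq RE_det); left; exists (tr_prefix K ++ qs), (inr q).
    split => //; split; first exact: (path_chain_rotrace_prefix (t := inr q) c h).
    exact: rotrace_stuck stuck_t.
  by rewrite fK /=; case: (role q); [right; left | left].
have [d mp'] := mp_den_exists (X := 'I_n) (fun j => wt (s j)).
rewrite (Strace_stop d).
  symmetry; apply: (Wmp_eq RE_det); right; exists (prepend (tr_prefix K) s); split.
    apply: inf_path_prepend => N.
    exact: (path_chain_rotrace_prefix (t := inr (s N)) c (inf_path_prefix hs N)).
  apply: (mp_den_iff _ _ _ _ mp'); apply: iff_sym.
  exact: (mean_liminf_nonneg_prepend (@wt _ _ RE)).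
by case: mp mp' => [[M ->]|[M ->]] [[M' ->]|[M' ->]]; by [left | right; left | case: M].
Qed.

Lemma entrance_exit_edge {K k} : next_entrance (f (entrance K)) = Some k ->
  entrance K.+1 = lshift m k /\
  edge E (last (inl (entrance K)) (map inr (segment (entrance K)))) (inl (lshift n k)).
Proof.
by move=> E_K; split; [rewrite /= E_K | apply: path_chain_last (segment_spec E_K).1].
Qed.

Lemma size_segment {e k} : next_entrance (f e) = Some k -> (size (segment e) <= #|pos E|).
Proof.
move=> /segment_spec [h _]; rewrite -(card_uniqP (path_chain_uniq E_roPG.2 h)).
exact: max_card.
Qed.

Section NeverStops.
Hypothesis never_stops : forall K, next_entrance (f (entrance K)) <> None.

Lemma continues_all K : continues K.
Proof. by move=> j _; apply: never_stops. Qed.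

Lemma next_entrance_all K : exists k, next_entrance (f (entrance K)) = Some k.
Proof. exact: next_entranceP (continues_all K.+1) (ltnSn K). Qed.

(* If the segments were eventually empty, the entrances would form an orbit in the finite
   set [l + m] in which each entrance determines its predecessor, since an exit has at
   most one predecessor; returning to the first entrance of the orbit is then impossible. *)
Lemma segments_nonempty_infinitely N : exists j, (N <= j) /\ segment (entrance j) <> [::].
Proof.
apply: NNPP => fin.
have eventually_nil : exists K0, forall j, (K0 <= j) -> segment (entrance j) = [::].
  by exists N => j le_Nj; apply: NNPP => ne; apply: fin; exists j.
have [K0 [segs_nil K0_least]] := least_nat _ eventually_nil.
have step a : exists k, entrance (K0 + a).+1 = lshift m k /\
    edge E (inl (entrance (K0 + a))) (inl (lshift n k)).
  have [k E_k] := next_entrance_all (K0 + a); have [-> e] := entrance_exit_edge E_k.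
  by exists k; rewrite segs_nil ?leq_addr in e.
have pred_unique a b :
    entrance (K0 + a.+1) = entrance (K0 + b.+1) -> entrance (K0 + a) = entrance (K0 + b).
  rewrite !addnS; have [k [-> e]] := step a; have [k' [-> e']] := step b.
  by move=> /lshift_inj Ek; rewrite Ek in e; case: (exit_pred_unique E_roPG e e').
have [b] := injective_orbit_returns (fun a => entrance (K0 + a)) pred_unique.
rewrite /= addnS addn0; have [k [-> e]] := step b.
case: K0 segs_nil K0_least e {step pred_unique} => [|K0] segs_nil K0_least e.
  by move=> /(congr1 val) /=; have := ltn_ord k; lia.
have [k' E_k'] := next_entrance_all K0; have [-> e'] := entrance_exit_edge E_k'.
move=> /lshift_inj Ek; rewrite Ek in e; have := exit_pred_unique E_roPG e e'.
case E_seg: (segment (entrance K0)) => [|q qs] /=; last by rewrite (last_map inr).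
case: (K0_least K0 (ltnSn K0)) => j; rewrite leq_eqVlt => /orP [/eqP <- //|]; exact: segs_nil.
Qed.

Section Enumeration.
Variable phi : nat -> nat.
Hypothesis phi_incr : forall t, (phi t < phi t.+1).
Hypothesis phi_enum : forall j, segment (entrance j) <> [::] <-> exists t, phi t = j.

Lemma tr_prefix_skip {a b} : (a <= b) -> (forall j, (a <= j < b) -> ~ exists t, phi t = j) ->
  tr_prefix b = tr_prefix a.
Proof.
move=> /subnK <-; elim: (b - a) => [//|k IH] skip.
rewrite addSn tr_prefixS IH => [|j /andP [le_aj lt_j]]; last by apply: skip; rewrite le_aj ltnW.
have : ~ exists t, phi t = k + a by apply: skip; rewrite leq_addl addSn leqnn.
by move=> /phi_enum /NNPP ->; rewrite cats0.
Qed.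

Lemma tr_prefix_phi0 : tr_prefix (phi 0) = [::].
Proof.
rewrite (tr_prefix_skip (leq0n (phi 0))) // => j /andP [_ lt_j] [t Et].
by move: lt_j; rewrite -Et ltnNge increasing_leq_mono.
Qed.

Lemma tr_prefix_phiS t : tr_prefix (phi t.+1) = tr_prefix (phi t) ++ segment (entrance (phi t)).
Proof.
rewrite -tr_prefixS; apply: tr_prefix_skip => [//|j /andP [lt_j lt_j'] [t' Et]].
move: lt_j lt_j'; rewrite -Et !(leqW_mono (increasing_leq_mono phi_incr)); lia.
Qed.

Lemma size_tr_prefix_phi t :
  (size (tr_prefix (phi t)) < size (tr_prefix (phi t.+1)) <= size (tr_prefix (phi t)) + #|pos E|).
Proof.
rewrite tr_prefix_phiS size_cat.
have [k E_k] := next_entrance_all (phi t); have := size_segment E_k.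
have : segment (entrance (phi t)) <> [::] by apply/phi_enum; exists t.
by case: (segment _) => [//|q qs] _ /=; lia.
Qed.

Lemma partial_sum_phi t :
  partial_sum (fun t => weight_of (u (phi t))) t = weight_sum wt (tr_prefix (phi t)).
Proof.
elim: t => [|t IH] /=; first by rewrite tr_prefix_phi0.
rewrite IH tr_prefix_phiS weight_sum_cat (tr_seq_entrance (continues_all _)).
by have [k E_k] := next_entrance_all (phi t); rewrite (weight_segment E_k).
Qed.

Variable x0 : pos E.

Lemma rotrace_limit_path : inf_path RE i (prefix_limit x0 tr_prefix).
Proof.
apply: (inf_path_of_prefixes i _ 0) => N _.
set s' := prefix_limit x0 tr_prefix; set K := phi N.+1.
have lt_N : (N < size (tr_prefix K)).
  have n_incr t : (size (tr_prefix (phi t)) < size (tr_prefix (phi t.+1))).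
    by case/andP: (size_tr_prefix_phi t).
  exact: (increasing_ge_id _ n_incr N.+1).
have [k E_k] := next_entrance_all K.
have := tr_path_tr_prefix (continues_all K) (tr_path_of_path_chain (segment_spec E_k).1).
rewrite -(mkseq_prefix_limit x0 tr_prefix tr_prefix_extends K).
have [r ->] := mkseq_split_at s' lt_N.
by rewrite -catA => /tr_path_prefix h; apply/path_chain_rotraceE.
Qed.

Lemma mean_prefix_limit :
  mean_liminf_nonneg (fun j => wt (prefix_limit x0 tr_prefix j)) <->
  mean_liminf_nonneg (fun t => weight_of (u (phi t))).
Proof.
have [B HB] := finite_fun_bounded (@wt _ _ E).
apply: (mean_liminf_nonneg_blocks _ _ (fun t => size (tr_prefix (phi t))) B #|pos E|).
- by move=> j; apply: HB.
- by rewrite tr_prefix_phi0.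
- exact: size_tr_prefix_phi.
move=> t; rewrite partial_sum_phi -(partial_sum_nth x0).
apply: eq_partial_sum => j lt_j.
by rewrite (prefix_limit_nth x0 tr_prefix tr_prefix_extends (phi t)).
Qed.

End Enumeration.

Lemma Strace_never_stops : Strace f i = Wmp RE i.
Proof.
have [phi [phi_incr phi_enum]] := enum_infinite _ segments_nonempty_infinitely.
have [x0 _] : exists x0 : pos E, True.
  have : segment (entrance (phi 0)) <> [::] by apply/phi_enum; exists 0.
  by case: (segment _) => [//|q _] _; exists q.
have [d mp] := mp_den_exists (X := 'I_n) (fun t => weight_of (u (phi t))).
rewrite (Strace_eq (d := d)).
  symmetry; apply: (Wmp_eq (rotrace_deterministic E_roPG.2)); right.
  exists (prefix_limit x0 tr_prefix); split; first exact: rotrace_limit_path _ phi_incr phi_enum x0.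
  exact: (mp_den_iff _ _ _ (iff_sym (mean_prefix_limit _ phi_incr phi_enum x0)) mp).
apply/Strace_denE; right; split; first by move=> j; rewrite (tr_seq_entrance (continues_all j)).
exists phi; split => //; split => // j.
by rewrite (is_wl_tr_seq (continues_all j.+1) (ltnSn j)).
Qed.

End NeverStops.

Lemma Strace_rotrace : Strace f i = Wmp RE i.
Proof.
case: (classic (exists K, next_entrance (f (entrance K)) = None)) => [stop|never].
  by have [K [stopK K_least]] := least_nat _ stop; apply: (Strace_stops K) => // j /K_least.
by apply: Strace_never_stops => K stopK; apply: never; exists K.
Qed.

End TraceRun.

Theorem theoremD5 :
  (forall (m l n : nat) (C : roMPG m l) (D : roMPG l n),
      is_roPG C -> is_roPG D ->
      Wmp (roseq C D) = Scomp (Wmp C) (Wmp D)) /\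
  (forall (m1 n1 m2 n2 : nat) (C : roMPG m1 n1) (D : roMPG m2 n2),
      is_roPG C -> is_roPG D ->
      Wmp (rosum C D) = Ssum (Wmp C) (Wmp D)) /\
  (forall (l m n : nat) (E : roMPG (l + m) (l + n)),
      is_roPG E ->
      Strace (Wmp E) = Wmp (rotrace E)).
Proof.
split; [exact: @Wmp_roseq | split; first exact: @Wmp_rosum].
move=> l m n E E_roPG; apply: functional_extensionality => i.
exact: Strace_rotrace.
Qed.
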